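(* Let $(G,N,\theta)_{\mathcal{H}}$ be a modular $\mathcal{H}$-triple, $E=\mathbb{F}_p[\theta]$, $\bar G=G/N$ acting on $E$ by $z^{gN}=z^{\sigma_g}$. Choose a representation $X$ affording $\theta$ realized over $E$, let $A$ be the associated $G$-algebra, choose a unitary embedding $\iota:A\to\mathrm{M}_{ms}(\mathbb{F}_p)$ and a function $Y:G\to\mathrm{GL}_{ms}(\mathbb{F}_p)$ with the properties below, and let $\bar\alpha\in\mathbf{Z}^2(\bar G,E^\times)$ be defined by $Y(g)Y(h)=Y(gh)\iota(\bar\alpha(gN,hN)1_A)$. Then the cohomology class $[\bar\alpha]\in\mathbf{H}^2(\bar G,E^\times)$ does not depend on the choices of $X$, $\iota$ and $Y$; it is determined by the $\mathcal{H}$-triple.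
   Context: $p$ prime; $F$ a sufficiently large finite field of characteristic $p$ (residue field of a $p$-modular system), $\mathcal{H}$ a group of automorphisms acting on $F$ and inducing all automorphisms of $F$. Modular $\mathcal{H}$-triple: $N\trianglelefteq G$ finite, $\theta\in\mathrm{IBr}(N)$ with $G$-stable $\mathcal{H}$-orbit. $E=\mathbb{F}_p[\theta]$: subfield of $F$ generated by reductions of values of $\theta$; $m=\theta(1)$, $s=[E:\mathbb{F}_p]$. For $g\in G$, $\sigma_g\in\mathrm{Gal}(E/\mathbb{F}_p)$ is the unique element such that $n\mapsto X(gng^{-1})^{\sigma_g}$ affords $\theta$ (it is independent of $X$, being the restriction of any $\tau\in\mathcal{H}$ with $\theta^\tau=\theta^{g^{-1}}$). Associated $G$-algebra: $A=\mathrm{M}_m(E)$ with $x^g=T_g^{-1}x^{\sigma_g}T_g$ where $X(gng^{-1})^{\sigma_g}=T_gX(n)T_g^{-1}$ for all $n$. Properties of $Y$: $Y(g)^{-1}\iota(x)Y(g)=\iota(x^g)$; $Y(n)=\iota(X(n))$ for $n\in N$; $Y(gn)=Y(g)Y(n)$, $Y(ng)=Y(n)Y(g)$. Then $Y(gh)^{-1}Y(g)Y(h)\in\iota(E^\times 1_A)$ and the resulting $\alpha(g,h)\in E^\times$ depends only on the cosets $gN,hN$, giving $\bar\alpha$. Factor sets $\beta\in\mathbf{Z}^2(\bar G,E^\times)$ satisfy $\beta(xy,z)\beta(x,y)^z=\beta(x,yz)\beta(y,z)$; $\beta,\beta'$ are cohomologous if $\beta'(x,y)=\beta(x,y)\gamma(x)^y\gamma(y)\gamma(xy)^{-1}$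 for some $\gamma:\bar G\to E^\times$; $\mathbf{H}^2$ is the group of classes. *)

From HB Require Import structures.
From mathcomp Require Import all_boot all_order all_algebra all_fingroup all_solvable all_field all_character.
Set Implicit Arguments. Unset Strict Implicit. Unset Printing Implicit Defensive.
Import GRing.Theory.
Local Open Scope ring_scope.

Definition is_subfield_set (F : finFieldType) (S : {set F}) : bool :=
  [&& (1 : F) \in S,
      [forall x in S, [forall y in S, (x - y \in S) && (x * y \in S)]]
    & [forall x in S, x^-1 \in S]].

Definition gen_subfield (F : finFieldType) (A : {set F}) : {set F} :=
  [set z : F | [forall S : {set F}, (is_subfield_set S && (A \subset S)) ==> (z \in S)]].

(* E = F_p[theta]: the subfield generated by the reductions of the values of
   theta, i.e. by the traces of a representation affording theta. *)
Definition trace_field (F : finFieldType) (gT : finGroupType) (N : {group gT})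
  (m : nat) (rX : mx_representation F N m) : {set F} :=
  gen_subfield [set \tr (rX n) | n in N].

(* x is a matrix with entries in E, i.e. x belongs to A = M_m(E). *)
Definition mx_over_set (F : finFieldType) (m : nat) (E : {set F}) (x : 'M[F]_m) : Prop :=
  forall i j, x i j \in E.

Definition similar_on (F : finFieldType) (gT : finGroupType) (N : {set gT}) (m : nat)
  (X Z : gT -> 'M[F]_m) : Prop :=
  exists2 P : 'M[F]_m, P \in unitmx & forall n, n \in N -> X n *m P = P *m Z n.

(* (G, N, theta)_H is a modular H-triple, where theta is afforded by rX0 and
   H induces all automorphisms of F; sigma g is a field automorphism tau of F
   with theta^tau = theta^(g^-1), i.e. n |-> X0(g n g^-1)^tau affords theta.
   Its restriction to E is sigma_g. *)
Definition stable_orbit_sigma (F : finFieldType) (gT : finGroupType) (G N : {group gT})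
  (m : nat) (rX0 : mx_representation F N m) (sigma : gT -> {rmorphism F -> F}) : Prop :=
  forall g, g \in G ->
    similar_on N (fun n => map_mx (sigma g) (rX0 (g * n * g^-1)%g)) rX0.

Definition admissible_choice (p : nat) (F : finFieldType) (gT : finGroupType)
  (G N : {group gT}) (m s : nat) (rX0 : mx_representation F N m)
  (sigma : gT -> {rmorphism F -> F})
  (X T : gT -> 'M[F]_m) (iota : 'M[F]_m -> 'M['F_p]_(m * s))
  (Y : gT -> 'M['F_p]_(m * s)) (alpha : gT -> gT -> F) : Prop :=
  let E := trace_field rX0 in
  [/\
   [/\ mx_repr N X, (forall n, n \in N -> mx_over_set E (X n)) & similar_on N X rX0],
   (forall g, g \in G -> [/\ mx_over_set E (T g), T g \in unitmx &
       forall n, n \in N ->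
         map_mx (sigma g) (X (g * n * g^-1)%g) = T g *m X n *m invmx (T g)]),
   [/\ iota 1%:M = 1%:M,
       (forall x y, mx_over_set E x -> mx_over_set E y -> iota (x + y) = iota x + iota y),
       (forall x y, mx_over_set E x -> mx_over_set E y -> iota (x *m y) = iota x *m iota y)
     & (forall x y, mx_over_set E x -> mx_over_set E y -> iota x = iota y -> x = y)],
   [/\ (forall g, g \in G -> Y g \in unitmx),
       (forall g x, g \in G -> mx_over_set E x ->
          invmx (Y g) *m iota x *m Y g
          = iota (invmx (T g) *m map_mx (sigma g) x *m T g)),
       (forall n, n \in N -> Y n = iota (X n)),
       (forall g n, g \in G -> n \in N -> Y (g * n)%g = Y g *m Y n)
     & (forall g n, g \in G -> n \in N -> Y (n * g)%g = Y n *m Y g)]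
   &
   (forall g h, g \in G -> h \in G ->
      [/\ alpha g h \in E, alpha g h != 0 &
          Y g *m Y h = Y (g * h)%g *m iota ((alpha g h)%:M)])].

(* alpha and alpha' (viewed on Gbar = G/N) define the same class in
   H^2(Gbar, E^x), with Gbar acting on E by z^{gN} = z^{sigma_g}. *)
Definition cohomologous (F : finFieldType) (gT : finGroupType) (G N : {group gT})
  (E : {set F}) (sigma : gT -> {rmorphism F -> F}) (a b : gT -> gT -> F) : Prop :=
  exists gamma : coset_of N -> F,
    (forall x, x \in (G / N)%g -> gamma x \in E /\ gamma x != 0) /\
    (forall g h, g \in G -> h \in G ->
       b g h = a g h * sigma h (gamma (coset N g)) * gamma (coset N h)
               / gamma (coset N (g * h)%g)).

From HB Require Import structures.
From mathcomp Require Import all_boot all_order all_algebra all_fingroup all_solvable.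
From mathcomp Require Import all_field all_character.
Import GRing.Theory.
Local Open Scope ring_scope.
Set Implicit Arguments. Unset Strict Implicit. Unset Printing Implicit Defensive.

(* Two admissible choices are compared in two steps.  First the data (X, T, iota)
   are made equal: X and X' are similar over F and realized over E, so by Schur's
   lemma and Frobenius descent they are similar over E via some P, and by the
   Skolem-Noether theorem for M_m(E) the embedding x |-> iota (P x P^-1) is
   conjugate to iota' by some Q.  Conjugating Y by Q gives a function with the
   properties of Y for (X', T', iota') and still with factor set alpha.  Second,
   for fixed (X, T, iota), two such functions Y, Y' differ by Y^-1 Y', which
   centralizes iota(M_m(E)) and so equals iota(gamma 1) with gamma constant on
   the cosets of N; expanding Y'(g) Y'(h) in two ways shows alpha' = alpha * d gamma.
   Skolem-Noether and the centralizer statement both come from a counting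
   argument: as |E|^m = p^(ms), the space F_p^(ms) is, through iota, the simple
   M_m(E)-module E^m. *)

Section FrobeniusPower.
Variables (F : fieldType) (p : nat) (charFp : p \in [pchar F]) (k : nat).

Fact expp_is_nmod_morphism : nmod_morphism (fun x : F => x ^+ (p ^ k)).
Proof.
have pk : [pchar F].-nat (p ^ k)%N.
  by rewrite pnatX (eq_pnat _ (pcharf_eq charFp)) pnat_id ?(pcharf_prime charFp).
split=> [|x y]; last exact: exprDn_pchar.
by rewrite expr0n expn_eq0 eqn0Ngt prime_gt0 ?(pcharf_prime charFp).
Qed.

Fact expp_is_monoid_morphism : monoid_morphism (fun x : F => x ^+ (p ^ k)).
Proof. by split=> [|x y]; rewrite ?expr1n ?exprMn. Qed.

Definition frobenius_pow : {rmorphism F -> F} :=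
  HB.pack (fun x : F => x ^+ (p ^ k))
    (GRing.isNmodMorphism.Build F F _ expp_is_nmod_morphism)
    (GRing.isMonoidMorphism.Build F F _ expp_is_monoid_morphism).

Lemma frobenius_powE x : frobenius_pow x = x ^+ (p ^ k).
Proof. by []. Qed.

End FrobeniusPower.

Section FiniteSubfield.
Variables (F : finFieldType) (E : divringClosed F).

Lemma subfield_card_gt1 : (1 < #|E|)%N.
Proof.
rewrite (cardD1 0) rpred0 add1n ltnS; apply/card_gt0P; exists 1.
by rewrite !inE oner_eq0 rpred1.
Qed.

Lemma subfield_expcard x : x \in E -> x ^+ #|E| = x.
Proof.
move=> xE; have [->|x_nz] := eqVneq x 0.
  by rewrite expr0n; case: #|E| subfield_card_gt1.
pose U := [set y in E | y != 0].
have U_x : x \in U by rewrite !inE xE.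
have mulxU : [set x * y | y in U] = U.
  apply/eqP; rewrite eqEcard card_in_imset ?leqnn ?andbT; last first.
    by move=> a b _ _ /mulfI; apply.
  apply/subsetP => _ /imsetP[y /setIdP[yE y_nz] ->].
  by rewrite !inE rpredM ?mulf_neq0.
have prodU_nz : \prod_(y in U) y != 0.
  by apply/prodf_neq0 => y /setIdP[].
have : x ^+ #|U| * \prod_(y in U) y = 1 * \prod_(y in U) y.
  rewrite mul1r -prodr_const -big_split /=.
  by rewrite -(big_imset id (in2W (mulfI x_nz))) mulxU.
move/(mulIf prodU_nz) => xU1.
have -> : #|E| = #|U|.+1.
  rewrite (cardD1 0) rpred0 add1n; congr _.+1.
  by apply: eq_card => y; rewrite !inE andbC.
by rewrite exprS xU1 mulr1.
Qed.

Lemma subfield_expcardP x : (x ^+ #|E| == x) = (x \in E).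
Proof.
apply/idP/idP => [/eqP xq_x|/subfield_expcard ->//].
apply: contraT => xNE.
pose P : {poly F} := 'X^#|E| - 'X.
have sizeP : size P = #|E|.+1.
  by rewrite size_polyDl ?size_polyXn // size_polyN size_polyX ltnS subfield_card_gt1.
have P_nz : P != 0 by rewrite -size_poly_eq0 sizeP.
have rootsP : all (root P) (x :: enum E).
  rewrite /= /root /P !hornerE xq_x subrr eqxx; apply/allP => y.
  by rewrite mem_enum => yE; rewrite /root !hornerE subfield_expcard ?subrr.
have := max_poly_roots P_nz rootsP.
by rewrite /= mem_enum xNE enum_uniq sizeP -cardE ltnn => /(_ isT).
Qed.

End FiniteSubfield.

Section GeneratedSubfield.
Variable F : finFieldType.

Lemma is_subfield_setP (S : {set F}) : reflect (divring_closed S) (is_subfield_set S).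
Proof.
apply: (iffP and3P) => [[S1 /forall_inP SBM /forall_inP SV]|[S1 SB SD]].
  have SM x y : x \in S -> y \in S -> (x - y \in S) && (x * y \in S).
    by move=> xS yS; move/forall_inP: (SBM x xS); apply.
  by split=> // x y xS yS; [case/andP: (SM x y xS yS) | case/andP: (SM x _ xS (SV y yS))].
have SV x : x \in S -> x^-1 \in S by move=> xS; rewrite -div1r SD.
split=> //; apply/forall_inP => x xS; last exact: SV.
by apply/forall_inP => y yS; rewrite SB //= -[y]invrK SD ?SV.
Qed.

Variable A : {set F}.

Lemma gen_subfieldP z :
  reflect (forall S, is_subfield_set S -> A \subset S -> z \in S) (z \in gen_subfield A).
Proof.
rewrite inE; apply: (iffP forallP) => [zS S S_sf AS|zS S].
  by have /implyP := zS S; apply; rewrite S_sf.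
by apply/implyP => /andP[]; apply: zS.
Qed.

Lemma gen_subfield_closed : divring_closed (gen_subfield A).
Proof.
split.
- by apply/gen_subfieldP => S /is_subfield_setP[].
- move=> x y /gen_subfieldP xS /gen_subfieldP yS; apply/gen_subfieldP => S S_sf AS.
  by case/is_subfield_setP: (S_sf) => _ SB _; rewrite SB ?xS ?yS.
- move=> x y /gen_subfieldP xS /gen_subfieldP yS; apply/gen_subfieldP => S S_sf AS.
  by case/is_subfield_setP: (S_sf) => _ _ SD; rewrite SD ?xS ?yS.
Qed.

Lemma gen_subfield_rmorph (f : {rmorphism F -> F}) :
  {homo f : a / a \in A} -> {homo f : z / z \in gen_subfield A}.
Proof.
move=> fA z /gen_subfieldP zS; apply/gen_subfieldP => S /is_subfield_setP[S1 SB SD] AS.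
have: z \in [set x | f x \in S]; last by rewrite inE.
apply: zS; last by apply/subsetP => a aA; rewrite inE (subsetP AS) ?fA.
by apply/is_subfield_setP; split=> [|x y|x y]; rewrite !inE ?rmorph1 ?rmorphB ?fmorph_div;
  [|apply: SB|apply: SD].
Qed.

End GeneratedSubfield.

HB.instance Definition _ (F : finFieldType) (A : {set F}) :=
  GRing.isDivringClosed.Build F (pred_of_set (gen_subfield A)) (gen_subfield_closed A).

Section FrobeniusFixedPoints.
Variables (F : finFieldType) (p s : nat) (charFp : p \in [pchar F]) (E : divringClosed F).
Hypothesis cardE : #|E| = (p ^ s)%N.
Local Notation tau := (frobenius_pow charFp s).

Lemma frobenius_pow_fixed x : (tau x == x) = (x \in E).
Proof. by rewrite frobenius_powE -cardE subfield_expcardP. Qed.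

Lemma mxOver_frobP m n (A : 'M[F]_(m, n)) : reflect (map_mx tau A = A) (A \is a mxOver E).
Proof.
apply: (iffP mxOverP) => [AE|tauA i j].
  by apply/matrixP => i j; rewrite mxE; apply/eqP; rewrite frobenius_pow_fixed.
by rewrite -frobenius_pow_fixed -{2}tauA mxE.
Qed.

Lemma mxOver_invmx m (A : 'M[F]_m) : A \is a mxOver E -> invmx A \is a mxOver E.
Proof. by move/mxOver_frobP => tauA; apply/mxOver_frobP; rewrite map_invmx tauA. Qed.

End FrobeniusFixedPoints.

Lemma unitmx_neq0 (F : fieldType) n (A : 'M[F]_n) : (0 < n)%N -> A \in unitmx -> A != 0.
Proof.
move=> n_gt0; apply: contraTneq => ->.
by rewrite unitmxE -(raddf0 (@scalar_mx F n)) det_scalar expr0n eqn0Ngt n_gt0 unitr0.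
Qed.

Section AbsolutelyIrreducibleDescent.
Variables (F : finFieldType) (gT : finGroupType) (N : {group gT}) (m : nat).
Variable rX : mx_representation F N m.
Hypothesis absirr : mx_absolutely_irreducible rX.

Lemma similar_onC (X Z : gT -> 'M[F]_m) : similar_on N X Z -> similar_on N Z X.
Proof.
case=> P Pu XP; exists (invmx P) => [|n nN]; first by rewrite unitmx_inv.
by apply: (canRL (mulKmx Pu)); rewrite !mulmxA -XP // mulmxK.
Qed.

Lemma similar_on_trans (X Z W : gT -> 'M[F]_m) :
  similar_on N X Z -> similar_on N Z W -> similar_on N X W.
Proof.
case=> P Pu XP [Q Qu ZQ]; exists (P *m Q) => [|n nN]; first by rewrite unitmx_mul Pu.
by rewrite mulmxA XP // -!mulmxA ZQ.
Qed.

Lemma similar_cent_scalar (X : gT -> 'M[F]_m) (Z : 'M[F]_m) : similar_on N X rX ->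
  (forall n, n \in N -> Z *m X n = X n *m Z) -> exists a, Z = a%:M.
Proof.
case=> P Pu XP cZX.
have /is_scalar_mxP[a PZ] : is_scalar_mx (invmx P *m Z *m P).
  apply: (mx_abs_irr_cent_scalar absirr); apply/centgmxP => n nN.
  have rXP : rX n = invmx P *m X n *m P by rewrite -mulmxA XP // mulKmx.
  by rewrite rXP !mulmxA !mulmxK // -(mulmxA _ Z) cZX // mulmxA.
exists a; have -> : Z = P *m (invmx P *m Z *m P) *m invmx P.
  by rewrite !mulmxA mulmxK // mulmxV // mul1mx.
by rewrite PZ scalar_mxC mulmxK.
Qed.
Variables (p s : nat) (charFp : p \in [pchar F]) (E : divringClosed F).
Hypothesis cardE : #|E| = (p ^ s)%N.
Local Notation tau := (frobenius_pow charFp s).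

(* By Schur, the Frobenius twist of an intertwiner P is a scalar multiple of P;
   normalizing one entry of P to 1 forces that scalar to be 1. *)
Lemma similar_on_mxOver (X1 X2 : gT -> 'M[F]_m) :
    (forall n, n \in N -> X1 n \is a mxOver E) ->
    (forall n, n \in N -> X2 n \is a mxOver E) ->
    similar_on N X1 rX -> similar_on N X2 rX ->
  exists P, [/\ P \in unitmx, P \is a mxOver E & forall n, n \in N -> X1 n *m P = P *m X2 n].
Proof.
move=> X1E X2E sX1 sX2; have [P0 P0u X1P0] := similar_on_trans sX1 (similar_onC sX2).
have m_gt0 : (0 < m)%N by case/andP: absirr.
have /matrix0Pn[i [j P0ij]] := unitmx_neq0 m_gt0 P0u.
pose P := (P0 i j)^-1 *: P0.
have Pu : P \in unitmx by rewrite unitmxZ ?unitfE ?invr_eq0.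
have Pij : P i j = 1 by rewrite mxE mulVf.
have X1P n : n \in N -> X1 n *m P = P *m X2 n.
  by move=> nN; rewrite -scalemxAl -scalemxAr X1P0.
have [a tauP] : exists a, invmx P *m map_mx tau P = a%:M.
  apply: (similar_cent_scalar sX2) => n nN.
  have /(mxOver_frobP charFp cardE) tauX1 := X1E n nN.
  have /(mxOver_frobP charFp cardE) tauX2 := X2E n nN.
  rewrite -mulmxA -{1}tauX2 -map_mxM -X1P // map_mxM tauX1 !mulmxA; congr (_ *m _).
  by apply: (canRL (mulmxK Pu)); rewrite -mulmxA X1P // mulKmx.
have tauPE : map_mx tau P = a *: P by rewrite -mul_mx_scalar -tauP mulKVmx.
have a1 : a = 1.
  by move/matrixP/(_ i j): tauPE; rewrite mxE [in RHS]mxE Pij rmorph1 mulr1 => ->.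
by exists P; split=> //; apply/(mxOver_frobP charFp cardE); rewrite tauPE a1 scale1r.
Qed.

End AbsolutelyIrreducibleDescent.

Lemma card_mxOver (T : finType) k l (S : {pred T}) :
  #|[set A : 'M[T]_(k, l) | A \is a mxOver S]| = (#|S| ^ (k * l))%N.
Proof.
pose mx_of (g : {ffun 'I_k * 'I_l -> T}) := \matrix_(i, j) g (i, j).
have mx_of_inj : injective mx_of.
  by move=> g h /matrixP gh; apply/ffunP => -[i j]; have := gh i j; rewrite !mxE.
rewrite -[k in (k * _)%N]card_ord -[l in (_ * l)%N]card_ord -card_prod -card_ffun_on.
rewrite -(card_imset _ mx_of_inj); congr #|pred_of_set _|; apply/setP => A.
rewrite inE; apply/mxOverP/imsetP => [AS|[g /ffun_onP gS -> i j]]; last by rewrite mxE.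
exists [ffun ij => A ij.1 ij.2]; last by apply/matrixP => i j; rewrite !mxE ffunE.
by apply/ffun_onP => -[i j]; rewrite ffunE.
Qed.

Lemma mul_rV_delta (R : pzSemiRingType) m n (c : 'rV[R]_m) (k : 'I_m) (j : 'I_n) :
  c *m delta_mx k j = c 0 k *: delta_mx 0 j.
Proof.
apply/rowP => l; rewrite !mxE (bigD1 k) //= big1 => [|i ik]; last first.
  by rewrite mxE (negPf ik) mulr0.
by rewrite mxE eqxx addr0 /=.
Qed.

Lemma mxOver_delta (R : pzSemiRingType) (S : semiringClosed R) m n (i : 'I_m) (j : 'I_n) :
  delta_mx i j \is a mxOver S.
Proof. by apply/mxOverP => k l; rewrite mxE rpred_nat. Qed.

Definition mx_embedding (F : fieldType) (E : {pred F}) (p m n : nat)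
    (iota : 'M[F]_m -> 'M['F_p]_n) :=
  [/\ iota 1%:M = 1%:M,
      {in mxOver E &, {morph iota : x y / x + y}},
      {in mxOver E &, {morph iota : x y / x *m y}}
    & {in mxOver E &, injective iota}].

Lemma additive_rV_mx (p n k : nat) (f : 'rV['F_p]_n -> 'rV['F_p]_k) :
  {morph f : u w / u + w} -> exists Q, forall u, f u = u *m Q.
Proof.
move=> fD; have fB : {morph f : u w / u - w}.
  by move=> u w; apply/eqP; rewrite eq_sym subr_eq -fD subrK.
pose g : {additive 'rV['F_p]_n -> 'rV['F_p]_k} :=
  HB.pack f (GRing.isZmodMorphism.Build _ _ f fB).
exists (\matrix_(i, j) f (delta_mx 0 i) 0 j) => u.
rewrite {1}[u]row_sum_delta mulmx_sum_row -[f _]/(g _) raddf_sum; apply: eq_bigr => i _.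
have -> : row i (\matrix_(i, j) f (delta_mx 0 i) 0 j) = g (delta_mx 0 i).
  by apply/rowP => j; rewrite !mxE.
by rewrite -[u 0 i]natr_Zp !scaler_nat raddfMn.
Qed.

Section Embeddings.
Variables (F : finFieldType) (E : divringClosed F) (p m n : nat).
Hypotheses (p_pr : prime p) (m_gt0 : (0 < m)%N) (cardEm : (#|E| ^ m)%N = (p ^ n)%N).
Let i0 : 'I_m := Ordinal m_gt0.

Lemma embedding_conjmx (iota : 'M[F]_m -> 'M['F_p]_n) P : mx_embedding E iota ->
    P \in unitmx -> P \is a mxOver E -> invmx P \is a mxOver E ->
  mx_embedding E (fun x => iota (P *m x *m invmx P)).
Proof.
case=> iota1 iotaD iotaM iota_inj Pu PE PiE.
have conjE x : x \is a mxOver E -> P *m x *m invmx P \is a mxOver E.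
  by move=> xE; rewrite !mxOverM.
split=> [|x y xE yE|x y xE yE|x y xE yE /(iota_inj _ _ (conjE x xE) (conjE y yE))].
- by rewrite mulmx1 mulmxV.
- by rewrite mulmxDr mulmxDl iotaD ?conjE.
- by rewrite -iotaM ?conjE // !mulmxA mulmxKV.
by move/(can_inj (mulmxKV Pu))/(can_inj (mulKmx Pu)).
Qed.

Section Frames.
Variable iota : 'M[F]_m -> 'M['F_p]_n.
Hypothesis iota_emb : mx_embedding E iota.

Let iotaD : {in mxOver E &, {morph iota : x y / x + y}}. Proof. by case: iota_emb. Qed.
Let iotaM : {in mxOver E &, {morph iota : x y / x *m y}}. Proof. by case: iota_emb. Qed.
Let iota_inj : {in mxOver E &, injective iota}. Proof. by case: iota_emb. Qed.
Lemma embedding0 : iota 0 = 0.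
Proof. by apply: (addrI (iota 0)); rewrite -iotaD ?rpred0 // !addr0. Qed.

Lemma embeddingB : {in mxOver E &, {morph iota : x y / x - y}}.
Proof. by move=> x y xE yE; apply/eqP; rewrite eq_sym subr_eq -iotaD ?subrK ?rpredB. Qed.

Lemma embedding_scalar_comm c x : c \in E -> x \is a mxOver E ->
  iota c%:M *m iota x = iota x *m iota c%:M.
Proof. by move=> cE xE; rewrite -!iotaM ?mxOver_scalar ?rpred0 // scalar_mxC. Qed.

Lemma embedding_scalarM c d : c \in E -> d \in E ->
  iota c%:M *m iota d%:M = iota (c * d)%:M.
Proof. by move=> cE dE; rewrite -iotaM ?mxOver_scalar ?rpred0 // -scalar_mxM. Qed.

Lemma embedding_scalar_inj : {in E &, injective (fun c => iota c%:M)}.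
Proof.
have sE a : a \in E -> (a%:M : 'M_m) \is a mxOver E.
  by move=> aE; rewrite mxOver_scalar ?rpred0.
move=> c d cE dE /(iota_inj (sE c cE) (sE d dE))/matrixP/(_ i0 i0).
by rewrite !mxE eqxx !mulr1n.
Qed.

Lemma exists_frame : exists2 v : 'rV['F_p]_n, v != 0 & v *m iota (delta_mx i0 i0) = v.
Proof.
have e00E : delta_mx i0 i0 \is a mxOver E := mxOver_delta _ _ _.
have /matrix0Pn[r [j e00_rj]] : iota (delta_mx i0 i0) != 0.
  rewrite -embedding0; apply/eqP => /(iota_inj e00E (rpred0 _))/matrixP/(_ i0 i0).
  by rewrite !mxE !eqxx => /eqP; rewrite oner_eq0.
exists (row r (iota (delta_mx i0 i0))).
  by apply/matrix0Pn; exists 0, j; rewrite mxE.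
by rewrite -row_mul -iotaM // mul_delta_mx.
Qed.

Section FrameMap.
Variable v : 'rV['F_p]_n.
Hypotheses (v_nz : v != 0) (v_fixed : v *m iota (delta_mx i0 i0) = v).

(* An M_m(E)-equivariant map from the rows E^m to F_p^n; it is injective since
   E^m is simple, hence bijective by counting. *)
Definition frame_map (c : 'rV[F]_m) := v *m iota (delta_mx i0 0 *m c).

Lemma mxOver_row_emb (c : 'rV_m) : c \is a mxOver E -> delta_mx i0 0 *m c \is a mxOver E.
Proof. by move=> cE; rewrite mxOverM ?mxOver_delta. Qed.

Lemma frame_mapM c x : c \is a mxOver E -> x \is a mxOver E ->
  frame_map c *m iota x = frame_map (c *m x).
Proof. by move=> cE xE; rewrite /frame_map -mulmxA -iotaM ?mxOver_row_emb // mulmxA. Qed.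

Lemma frame_mapD : {in mxOver E &, {morph frame_map : c d / c + d}}.
Proof. by move=> c d cE dE; rewrite /frame_map mulmxDr iotaD ?mxOver_row_emb // mulmxDr. Qed.

Lemma frame_mapB : {in mxOver E &, {morph frame_map : c d / c - d}}.
Proof.
by move=> c d cE dE; rewrite /frame_map mulmxBr embeddingB ?mxOver_row_emb // mulmxBr.
Qed.

Lemma frame_map_delta : frame_map (delta_mx 0 i0) = v.
Proof. by rewrite /frame_map mul_delta_mx. Qed.

Lemma frame_map_eq0 c : c \is a mxOver E -> frame_map c = 0 -> c = 0.
Proof.
move=> cE fc0; apply/eqP; apply: contraTT isT => /matrix0Pn[i [k]].
rewrite [i]ord1 => ck_nz; pose y := (c 0 k)^-1 *: delta_mx k i0.
have yE : y \is a mxOver E by rewrite mxOverZ ?mxOver_delta ?rpredV ?(mxOverP cE).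
have : frame_map (c *m y) = v.
  by rewrite -scalemxAr mul_rV_delta scalerA mulVf // scale1r frame_map_delta.
by rewrite -frame_mapM // fc0 mul0mx => /esym/eqP; rewrite (negPf v_nz).
Qed.

Lemma frame_map_inj : {in mxOver E &, injective frame_map}.
Proof.
move=> c d cE dE /eqP; rewrite -subr_eq0 -frame_mapB // => /eqP/frame_map_eq0.
by move=> /(_ (rpredB cE dE))/eqP; rewrite subr_eq0 => /eqP.
Qed.

Lemma frame_map_surj w : exists2 c, c \is a mxOver E & frame_map c = w.
Proof.
suff : w \in frame_map @: [set c | c \is a mxOver E].
  by case/imsetP => c; rewrite inE => cE ->; exists c.
suff -> : frame_map @: [set c | c \is a mxOver E] = setT by rewrite inE.
apply/eqP; rewrite eqEcard subsetT cardsT card_in_imset; last first.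
  by move=> c d; rewrite !inE; apply: frame_map_inj.
by rewrite card_mxOver mul1n cardEm card_mx card_ord Fp_cast // mul1n leqnn.
Qed.

End FrameMap.

Lemma embedding_cent Z : (forall x, x \is a mxOver E -> Z *m iota x = iota x *m Z) ->
  exists2 d, d \in E & Z = iota d%:M.
Proof.
move=> cZ; have [v v_nz v_fixed] := exists_frame.
have [c cE vZ] := frame_map_surj v_nz v_fixed (v *m Z).
have dE : c 0 i0 \in E := mxOverP cE 0 i0.
exists (c 0 i0) => //.
have vZ_d : v *m Z = v *m iota (c 0 i0)%:M.
  have e00E : delta_mx i0 i0 \is a mxOver E := mxOver_delta _ _ _.
  have dME : ((c 0 i0)%:M : 'M_m) \is a mxOver E := mxOver_scalar (rpred0 _) dE.
  rewrite -{1}v_fixed -mulmxA -(cZ _ e00E) mulmxA -vZ (frame_mapM v cE e00E).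
  rewrite mul_rV_delta -mul_mx_scalar -(frame_mapM _ (mxOver_delta _ _ _) dME).
  by rewrite frame_map_delta.
apply/row_matrixP => r; rewrite !rowE.
have [e eE <-] := frame_map_surj v_nz v_fixed (delta_mx 0 r).
have yE := mxOver_row_emb eE; rewrite /frame_map -!mulmxA -(cZ _ yE) mulmxA vZ_d.
by rewrite -mulmxA (embedding_scalar_comm dE yE).
Qed.

End Frames.

Lemma frame_transfer (iota1 iota2 : 'M[F]_m -> 'M['F_p]_n) v1 v2 :
    mx_embedding E iota1 -> mx_embedding E iota2 ->
    v1 != 0 -> v1 *m iota1 (delta_mx i0 i0) = v1 ->
  exists Q, forall c, c \is a mxOver E -> frame_map iota1 v1 c *m Q = frame_map iota2 v2 c.
Proof.
move=> emb1 emb2 v1_nz v1_fixed.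
have inv1_ex w : exists c, c \is a mxOver E /\ frame_map iota1 v1 c = w.
  by have [c cE fc] := frame_map_surj emb1 v1_nz v1_fixed w; exists c.
have [inv1 inv1K] := fin_all_exists inv1_ex.
have inv1D u w : inv1 (u + w) = inv1 u + inv1 w.
  have [uE fu] := inv1K u; have [wE fw] := inv1K w; have [uwE fuw] := inv1K (u + w).
  apply: (frame_map_inj emb1 v1_nz v1_fixed uwE (rpredD uE wE)).
  by rewrite fuw frame_mapD // fu fw.
have [Q fQ] : exists Q, forall w, frame_map iota2 v2 (inv1 w) = w *m Q.
  apply: additive_rV_mx => u w.
  by rewrite inv1D frame_mapD //; [case: (inv1K u) | case: (inv1K w)].
exists Q => c cE; rewrite -fQ; congr (frame_map _ _ _).
have [ciE fci] := inv1K (frame_map iota1 v1 c).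
exact: (frame_map_inj emb1 v1_nz v1_fixed).
Qed.

Lemma embedding_conj (iota1 iota2 : 'M[F]_m -> 'M['F_p]_n) :
    mx_embedding E iota1 -> mx_embedding E iota2 ->
  exists2 Q, Q \in unitmx & forall x, x \is a mxOver E -> iota1 x *m Q = Q *m iota2 x.
Proof.
move=> emb1 emb2; have [v1 v1_nz v1_fixed] := exists_frame emb1.
have [v2 v2_nz v2_fixed] := exists_frame emb2.
have [Q fQ] := frame_transfer v2 emb1 emb2 v1_nz v1_fixed.
have [Q' fQ'] := frame_transfer v1 emb2 emb1 v2_nz v2_fixed.
have frame1_eq (A B : 'M_n) : (forall c, c \is a mxOver E ->
    frame_map iota1 v1 c *m A = frame_map iota1 v1 c *m B) -> A = B.
  move=> fAB; apply/row_matrixP => r; rewrite !rowE.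
  by have [c cE <-] := frame_map_surj emb1 v1_nz v1_fixed (delta_mx 0 r); apply: fAB.
exists Q => [|x xE].
  have QQ' : Q *m Q' = 1%:M by apply: frame1_eq => c cE; rewrite mulmxA fQ // fQ' // mulmx1.
  by case/mulmx1_unit: QQ'.
apply: frame1_eq => c cE; rewrite !mulmxA frame_mapM // fQ ?fQ ?mxOverM //.
by rewrite frame_mapM.
Qed.

End Embeddings.

Lemma mxtrace_similar (F : fieldType) m (A B P : 'M[F]_m) :
  P \in unitmx -> A *m P = P *m B -> \tr A = \tr B.
Proof. by move=> Pu AP; rewrite -[A](mulmxK Pu) AP -mulmxA mxtrace_mulC mulmxKV. Qed.

Section TraceField.
Variables (F : finFieldType) (gT : finGroupType) (G N : {group gT}) (m : nat).
Variables (rX : mx_representation F N m) (sigma : gT -> {rmorphism F -> F}).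
Hypotheses (nsNG : (N <| G)%g) (stab : stable_orbit_sigma G rX sigma).
Local Notation E := (trace_field rX).

Lemma sigma_trace_field g x : g \in G -> x \in E -> sigma g x \in E.
Proof.
move=> gG; apply: gen_subfield_rmorph => _ /imsetP[n nN ->].
have nNg : (n ^ g)%g \in N by rewrite memJ_norm ?(subsetP (normal_norm nsNG)).
have [P Pu sXP] := stab gG; have := sXP _ nNg.
rewrite /= conjgE !mulgA mulgV mul1g mulgK => /(mxtrace_similar Pu).
by rewrite trace_map_mx => ->; apply/imsetP; exists (n ^ g)%g; rewrite // conjgE mulgA.
Qed.

Lemma mxOver_map_sigma g k l (M : 'M[F]_(k, l)) :
  g \in G -> M \is a mxOver E -> map_mx (sigma g) M \is a mxOver E.
Proof. by move=> gG /mxOverP ME; apply/mxOverP => i j; rewrite mxE sigma_trace_field. Qed.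

Lemma sigma_mx_surj g (M : 'M[F]_m) : g \in G -> M \is a mxOver E ->
  exists2 y, y \is a mxOver E & map_mx (sigma g) y = M.
Proof.
move=> gG ME; exists (map_mx (finv (sigma g)) M).
  apply/mxOverP => i j; rewrite mxE /finv; elim: (_.-1) => [|k IHk] /=.
    exact: (mxOverP ME).
  exact: sigma_trace_field.
by apply/matrixP => i j; rewrite !mxE f_finv //; apply: fmorph_inj.
Qed.

End TraceField.

Section FactorSets.
Variables (p : nat) (F : finFieldType) (gT : finGroupType) (G N : {group gT}) (m s : nat).
Variables (rX0 : mx_representation F N m) (sigma : gT -> {rmorphism F -> F}).
Hypotheses (p_pr : prime p) (charFp : p \in [pchar F]) (nsNG : (N <| G)%g).
Hypotheses (absirr : mx_absolutely_irreducible rX0) (cardE : #|trace_field rX0| = (p ^ s)%N).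
Hypothesis stab : stable_orbit_sigma G rX0 sigma.
Local Notation E := (trace_field rX0).

Let m_gt0 : (0 < m)%N. Proof. by case/andP: absirr. Qed.
Let cardEm : (#|E| ^ m)%N = (p ^ (m * s))%N. Proof. by rewrite cardE -expnM mulnC. Qed.
Let ms_gt0 : (0 < m * s)%N.
Proof.
have E_gt1 : (1 < #|E|)%N := subfield_card_gt1 _.
by rewrite muln_gt0 m_gt0 lt0n; apply: contraTneq E_gt1 => s0; rewrite cardE s0.
Qed.

Implicit Types (X T : gT -> 'M[F]_m) (iota : 'M[F]_m -> 'M['F_p]_(m * s)).
Implicit Types (Y : gT -> 'M['F_p]_(m * s)) (alpha : gT -> gT -> F).

Definition twisting_matrices X T :=
  forall g, g \in G -> [/\ T g \is a mxOver E, T g \in unitmx &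
    forall n, n \in N -> map_mx (sigma g) (X (g * n * g^-1)%g) = T g *m X n *m invmx (T g)].

Definition realization_data X T iota :=
  [/\ forall n, n \in N -> X n \is a mxOver E, similar_on N X rX0,
      twisting_matrices X T & mx_embedding E iota].

Definition projective_lift X T iota Y alpha :=
  [/\ forall g, g \in G -> Y g \in unitmx,
      forall g x, g \in G -> x \is a mxOver E ->
        iota x *m Y g = Y g *m iota (invmx (T g) *m map_mx (sigma g) x *m T g),
      forall n, n \in N -> Y n = iota (X n),
      forall g n, g \in G -> n \in N -> Y (g * n)%g = Y g *m Y n
    & forall g h, g \in G -> h \in G ->
        alpha g h \in E /\ Y g *m Y h = Y (g * h)%g *m iota (alpha g h)%:M].

Lemma admissible_choiceP X T iota Y alpha :
  admissible_choice G rX0 sigma X T iota Y alpha ->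
  realization_data X T iota /\ projective_lift X T iota Y alpha.
Proof.
case=> [[_ XE sX] Tdat [iota1 iotaD iotaM iota_inj] [Yu Yc YN YgN _] Ya].
split; first split=> [n /XE/mxOverP|//|g /Tdat[/mxOverP]|] //.
  by split=> // x y /mxOverP xE /mxOverP yE;
    [exact: iotaD | exact: iotaM | exact: iota_inj].
split=> // [g x gG /mxOverP xE|g h gG hG].
  by rewrite -Yc // !mulmxA mulmxV ?Yu // mul1mx.
by have [aE _ ->] := Ya g h gG hG.
Qed.

Lemma conj_normal g n : g \in G -> n \in N -> (g * n * g^-1)%g \in N.
Proof.
move=> gG nN; rewrite -mulgA -[g in (g * _)%g]invgK -conjgE memJ_norm ?groupV //.
exact: subsetP (normal_norm nsNG) g gG.
Qed.

(* Changing X by an intertwiner P changes T by P up to a scalar, by Schur's lemma,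
   so the induced action of g on M_m(E) is transported by conjugation by P. *)
Lemma twist_transport X1 T1 X2 T2 P g y :
    twisting_matrices X1 T1 -> twisting_matrices X2 T2 -> similar_on N X2 rX0 ->
    P \in unitmx -> (forall n, n \in N -> X1 n *m P = P *m X2 n) -> g \in G ->
  invmx (T1 g) *m map_mx (sigma g) (P *m y *m invmx P) *m T1 g
    = P *m (invmx (T2 g) *m map_mx (sigma g) y *m T2 g) *m invmx P.
Proof.
move=> T1dat T2dat sX2 Pu X1P gG; have [_ T1u T1X] := T1dat g gG.
have [_ T2u T2X] := T2dat g gG.
have sPu : map_mx (sigma g) P \in unitmx by rewrite map_unitmx.
have X1E n : n \in N -> X1 n = P *m X2 n *m invmx P by move=> nN; rewrite -X1P ?mulmxK.
have [mu Wmu] : exists mu,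
    invmx (T2 g) *m invmx (map_mx (sigma g) P) *m T1 g *m P = mu%:M.
  apply: (similar_cent_scalar absirr sX2) => n nN; have kN := conj_normal gG nN.
  set sX2k := map_mx (sigma g) (X2 (g * n * g^-1)%g).
  have T2X2 : invmx (T2 g) *m sX2k = X2 n *m invmx (T2 g).
    by rewrite /sX2k T2X // !mulmxA mulVmx // mul1mx.
  have T1X2 : invmx (map_mx (sigma g) P) *m T1 g *m P *m X2 n
      = sX2k *m invmx (map_mx (sigma g) P) *m T1 g *m P.
    have sX1k : map_mx (sigma g) (X1 (g * n * g^-1)%g)
        = map_mx (sigma g) P *m sX2k *m invmx (map_mx (sigma g) P).
      by rewrite X1E // !map_mxM map_invmx.
    rewrite -mulmxA -X1P // !mulmxA -(mulmxA (invmx (map_mx (sigma g) P)) (T1 g)).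
    rewrite -[T1 g *m X1 n](mulmxKV T1u).
    by rewrite -T1X // sX1k !mulmxA mulVmx // mul1mx.
  transitivity (invmx (T2 g) *m (invmx (map_mx (sigma g) P) *m T1 g *m P *m X2 n)).
    by rewrite !mulmxA.
  by rewrite T1X2 !mulmxA T2X2.
pose V := invmx (map_mx (sigma g) P) *m T1 g.
have Vu : V \in unitmx by rewrite unitmx_mul unitmx_inv sPu.
have VE : V = mu *: (T2 g *m invmx P).
  by rewrite scalemxAl -mul_mx_scalar -Wmu !mulmxA mulmxV // mul1mx mulmxK.
apply: (can_inj (mulKmx Vu)); transitivity (map_mx (sigma g) y *m V).
  by rewrite !map_mxM map_invmx !mulmxA mulmxK // mulVmx // mul1mx.
rewrite VE -scalemxAl -scalemxAr; congr (_ *: _).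
by rewrite !mulmxA mulmxKV // mulmxV // mul1mx.
Qed.

Lemma projective_lift_transport X1 T1 iota1 Y1 alpha X2 T2 iota2 :
    realization_data X1 T1 iota1 -> projective_lift X1 T1 iota1 Y1 alpha ->
    realization_data X2 T2 iota2 -> exists Y2, projective_lift X2 T2 iota2 Y2 alpha.
Proof.
case=> X1E sX1 T1dat emb1 [Y1u Y1c Y1N Y1gN Y1a] [X2E sX2 T2dat emb2].
have [P [Pu PE X1P]] := similar_on_mxOver absirr charFp cardE X1E X2E sX1 sX2.
have PiE := mxOver_invmx charFp cardE PE.
have conjE x : x \is a mxOver E -> P *m x *m invmx P \is a mxOver E.
  by move=> xE; rewrite !mxOverM.
have [Q Qu QP] := embedding_conj p_pr m_gt0 cardEm emb2 (embedding_conjmx emb1 Pu PE PiE).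
have iota2E x : x \is a mxOver E -> iota2 x = conjmx Q (iota1 (P *m x *m invmx P)).
  by move=> xE; rewrite conjumx // -(QP x xE) (mulmxK Qu).
have conjQM A B : conjmx Q (A *m B) = conjmx Q A *m conjmx Q B.
  by rewrite conjmxM ?inE ?stablemx_unit.
exists (fun g => conjmx Q (Y1 g)).
split=> [g gG|g y gG yE|n nN|g n gG nN|g h gG hG].
- by rewrite conjumx // !unitmx_mul unitmx_inv Qu Y1u.
- have [T2E T2u _] := T2dat g gG.
  have zE : invmx (T2 g) *m map_mx (sigma g) y *m T2 g \is a mxOver E.
    by rewrite !mxOverM ?(mxOver_invmx charFp cardE) ?(mxOver_map_sigma nsNG stab).
  rewrite (iota2E _ yE) (iota2E _ zE) -!conjQM (Y1c g _ gG (conjE y yE)).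
  by rewrite (twist_transport y T1dat T2dat sX2 Pu X1P gG).
- by rewrite (Y1N n nN) (iota2E _ (X2E n nN)) -(X1P n nN) (mulmxK Pu).
- by rewrite (Y1gN g n gG nN) conjQM.
have [aE Ya] := Y1a g h gG hG; split=> //.
have aME : ((alpha g h)%:M : 'M_m) \is a mxOver E := mxOver_scalar (rpred0 _) aE.
by rewrite -conjQM Ya conjQM (iota2E _ aME) (scalar_mxC (alpha g h) P) (mulmxK Pu).
Qed.

Lemma lift_ratio X T iota Y Y' alpha alpha' :
    realization_data X T iota -> projective_lift X T iota Y alpha ->
    projective_lift X T iota Y' alpha' ->
  exists d : gT -> F, forall g, g \in G ->
    [/\ d g \in E, d g != 0 & Y' g = Y g *m iota (d g)%:M].
Proof.
case=> _ _ Tdat emb [Yu Yc _ _ _] [Y'u Y'c _ _ _].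
suff d_ex g : exists d, g \in G -> [/\ d \in E, d != 0 & Y' g = Y g *m iota d%:M].
  by have [d dP] := fin_all_exists d_ex; exists d.
have [gG|] := boolP (g \in G); last by exists 0.
have [d dE Yd] : exists2 d, d \in E & invmx (Y g) *m Y' g = iota d%:M.
  apply: (embedding_cent p_pr m_gt0 cardEm emb) => z zE.
  have [TE Tu _] := Tdat g gG.
  have TzE : T g *m z *m invmx (T g) \is a mxOver E.
    by rewrite !mxOverM ?(mxOver_invmx charFp cardE).
  have [y yE yz] := sigma_mx_surj nsNG stab gG TzE.
  have zy : invmx (T g) *m map_mx (sigma g) y *m T g = z.
    by rewrite yz !mulmxA (mulVmx Tu) mul1mx (mulmxKV Tu).
  have := Yc g y gG yE; have := Y'c g y gG yE; rewrite zy => Y'z Yz.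
  rewrite -mulmxA -Y'z !mulmxA; congr (_ *m _).
  apply: (can_inj (mulmxK (Yu g gG))) => /=.
  by rewrite -mulmxA Yz mulKmx ?Yu // mulmxKV ?Yu.
have Y'E : Y' g = Y g *m iota d%:M by rewrite -Yd mulKVmx ?Yu.
exists d => _; split=> //; apply: contraTneq (Y'u g gG) => d0.
rewrite Y'E d0 (raddf0 (@scalar_mx F m)) (embedding0 emb) mulmx0.
by apply/negP => /(unitmx_neq0 ms_gt0); rewrite eqxx.
Qed.

Lemma lift_scalar_conj X T iota Y alpha g c :
    twisting_matrices X T -> projective_lift X T iota Y alpha -> g \in G -> c \in E ->
  iota c%:M *m Y g = Y g *m iota (sigma g c)%:M.
Proof.
move=> Tdat [_ Yc _ _ _] gG cE; have [_ Tu _] := Tdat g gG.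
by rewrite Yc ?mxOver_scalar ?rpred0 // map_scalar_mx scalar_mxC (mulmxKV Tu).
Qed.

Lemma lift_ratio_coset X T iota Y Y' alpha alpha' (d : gT -> F) g n :
    realization_data X T iota -> projective_lift X T iota Y alpha ->
    projective_lift X T iota Y' alpha' ->
    (forall g, g \in G -> [/\ d g \in E, d g != 0 & Y' g = Y g *m iota (d g)%:M]) ->
  g \in G -> n \in N -> d (g * n)%g = d g.
Proof.
case=> XE _ _ emb [Yu _ YN YgN _] [_ _ Y'N Y'gN _] dP gG nN.
have nG := subsetP (normal_sub nsNG) n nN.
have [dgE _ Y'g] := dP g gG; have [dgnE _ Y'gn] := dP _ (groupM gG nG).
have Y'gnE : Y' (g * n)%g = Y g *m Y n *m iota (d g)%:M.
  rewrite (Y'gN g n gG nN) Y'g (Y'N n nN) -mulmxA (embedding_scalar_comm emb dgE (XE n nN)).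
  by rewrite -(YN n nN) mulmxA.
apply: (embedding_scalar_inj m_gt0 emb dgnE dgE) => /=.
have YgYn_u : Y g *m Y n \in unitmx by rewrite unitmx_mul Yu ?Yu.
apply: (can_inj (mulKmx YgYn_u)) => /=.
by rewrite -Y'gnE -(YgN g n gG nN) -Y'gn.
Qed.

Lemma lifts_cohomologous X T iota Y Y' alpha alpha' :
    realization_data X T iota -> projective_lift X T iota Y alpha ->
    projective_lift X T iota Y' alpha' -> cohomologous G N E sigma alpha alpha'.
Proof.
move=> dat lift lift'; have [d dP] := lift_ratio dat lift lift'.
pose gam (x : coset_of N) := d (repr x).
have gamE g : g \in G -> gam (coset N g) = d g.
  move=> gG; have gN := subsetP (normal_norm nsNG) g gG.
  rewrite /gam; have := mem_repr_coset (coset N g).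
  rewrite val_coset // => /rcosetP[n nN ->].
  by rewrite conjgC (lift_ratio_coset dat lift lift' dP) // memJ_norm.
exists gam; split=> [x /morphimP[g _ gG ->]|g h gG hG].
  by rewrite gamE //; have [] := dP g gG.
case: dat => _ _ Tdat emb; case: (lift) => Yu _ _ _ Ya; case: lift' => _ _ _ _ Y'a.
have ghG := groupM gG hG; rewrite !gamE //.
have [dgE _ Y'g] := dP g gG; have [dhE _ Y'h] := dP h hG.
have [dghE dgh_nz Y'gh] := dP _ ghG.
have [aE Yah] := Ya g h gG hG; have [a'E Y'ah] := Y'a g h gG hG.
have sdgE : sigma h (d g) \in E := sigma_trace_field nsNG stab hG dgE.
have : Y (g * h)%g *m iota (alpha g h * sigma h (d g) * d h)%:M
     = Y (g * h)%g *m iota (d (g * h)%g * alpha' g h)%:M.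
  rewrite -(embedding_scalarM emb (rpredM aE sdgE) dhE) -(embedding_scalarM emb aE sdgE).
  rewrite -(embedding_scalarM emb dghE a'E) !mulmxA -Yah -Y'gh -Y'ah Y'g Y'h.
  rewrite -!mulmxA (mulmxA (iota _)) (lift_scalar_conj Tdat lift hG dgE).
  by rewrite !mulmxA.
move/(can_inj (mulKmx (Yu _ ghG))).
move/(embedding_scalar_inj m_gt0 emb (rpredM (rpredM aE sdgE) dhE) (rpredM dghE a'E)) ->.
by rewrite [d _ * _]mulrC mulfK.
Qed.

End FactorSets.

Unset Implicit Arguments.

Theorem mainTheorem10 (p : nat) (F : finFieldType) (gT : finGroupType)
  (G N : {group gT}) (m s : nat) (rX0 : mx_representation F N m)
  (sigma : gT -> {rmorphism F -> F})
  (X1 T1 X2 T2 : gT -> 'M[F]_m)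
  (iota1 iota2 : 'M[F]_m -> 'M['F_p]_(m * s))
  (Y1 Y2 : gT -> 'M['F_p]_(m * s)) (alpha1 alpha2 : gT -> gT -> F) :
  prime p -> p \in [pchar F] -> (N <| G)%g ->
  mx_absolutely_irreducible rX0 ->
  #|trace_field rX0| = (p ^ s)%N ->
  stable_orbit_sigma G rX0 sigma ->
  admissible_choice G rX0 sigma X1 T1 iota1 Y1 alpha1 ->
  admissible_choice G rX0 sigma X2 T2 iota2 Y2 alpha2 ->
  cohomologous G N (trace_field rX0) sigma alpha1 alpha2.
Proof.
move=> p_pr charFp nsNG absirr cardE stab /admissible_choiceP[dat1 lift1].
case/admissible_choiceP=> dat2 lift2.
have [Y lift] := projective_lift_transport p_pr charFp nsNG absirr cardE stab dat1 lift1 dat2.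
exact: (lifts_cohomologous p_pr charFp nsNG absirr cardE stab dat2 lift lift2).
Qed.
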